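(* Let $(E,A)$ satisfy the standing assumptions below, set $p:=p_{\mathrm{res}}^{(E,A)}+1$ and let $(S_l(t))_{t\geq 0}$ and $(S_r(t))_{t\geq 0}$ be the $p$-times integrated semigroups of $(E,A)$. Let $x\in X_{\operatorname{ran}}$. If $S_r(t)x=0$ for all $t\geq 0$, then $x=0$.
   Context: Standing assumptions: $X$, $Z$ complex Banach spaces; $E\in L(X,Z)$; $A\colon\mathrm{dom}(A)\subseteq X\to Z$ closed and densely defined; $(E,A)$ has a complex resolvent index $p_{\mathrm{res}}^{(E,A)}$, i.e.~the smallest $n\in\mathbb N_0$ with $\mathbb C_{\operatorname{Re}>\omega}\subseteq\rho(E,A)$ and $\Vert(\lambda E-A)^{-1}\Vert\le C|\lambda|^{n-1}$ on $\mathbb C_{\operatorname{Re}>\omega}$ for some $\omega\in\mathbb R$, $C>0$; with $R_r(\lambda)=(\lambda E-A)^{-1}E$ and $X_{\operatorname{ran}}\coloneqq\overline{\operatorname{ran}R_r(\lambda)^p}$, additionally $X_{\operatorname{ran}}\cap\ker E=\{0\}$. $(S_r(t))_{t\ge0}$ is the $p$-times integrated semigroup on $X_{\operatorname{ran}}$: an exponentially bounded family with $R_r(\lambda)x=\lambda^p\int_0^\infty \mathrm e^{-\lambda t}S_r(t)x\,\mathrm dt$ for $x\in X_{\operatorname{ran}}$ and large $\operatorname{Re}\lambda$ (and $S_l$ the analogous family on $\overline{\operatorname{ran}(E(\lambda E-A)^{-1})^p}$). *)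

From HB Require Import structures.
From mathcomp Require Import all_boot all_order all_algebra.
From mathcomp Require Import all_classical all_reals all_analysis.
From mathcomp Require complex.
Import Order.TTheory GRing.Theory Num.Theory.
Import numFieldNormedType.Exports.
Import complex.

Set Implicit Arguments.
Unset Strict Implicit.
Unset Printing Implicit Defensive.

Local Open Scope ring_scope.
Local Open Scope classical_set_scope.

Section Defs.
Variable R : realType.
Local Notation C := R[i].

Definition rC (r : R) : C := (r%:C)%C.

Definition cexp (z : C) : C :=
  rC (expR (complex.Re z)) * (cos (complex.Im z) +i* sin (complex.Im z))%C.

Section Ops.
Variables X Z : completeNormedModType C.

(* A : dom(A) ⊆ X -> Z is a closed, densely defined (linear) operator,
   represented by its domain D (a linear subspace) and a function A that
   is linear on D (values outside D are irrelevant). *)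
Definition closed_densely_defined (D : set X) (A : X -> Z) : Prop :=
  [/\ D 0,
      (forall (a : C) x y, D x -> D y -> D (a *: x + y)),
      (forall (a : C) x y, D x -> D y -> A (a *: x + y) = a *: A x + A y),
      closed [set xz : X * Z | D xz.1 /\ xz.2 = A xz.1]
    & closure D = setT].

Definition is_resolvent (E : X -> Z) (D : set X) (A : X -> Z)
    (l : C) (Rl : Z -> X) : Prop :=
  (forall z, D (Rl z) /\ l *: E (Rl z) - A (Rl z) = z) /\
  (forall x, D x -> Rl (l *: E x - A x) = x).

Definition in_resolvent_set (E : X -> Z) (D : set X) (A : X -> Z) (l : C) :=
  exists Rl : Z -> X, is_resolvent E D A l Rl /\ continuous Rl.

Definition resolvent_bound (E : X -> Z) (D : set X) (A : X -> Z) (n : nat) :=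
  exists (om c : R), 0 < c /\
    forall l : C, om < complex.Re l ->
      exists Rl : Z -> X, [/\ is_resolvent E D A l Rl, continuous Rl &
        forall z, `|Rl z| <= rC c * `|l| ^ (n%:Z - 1) * `|z|].

Definition resolvent_index (E : X -> Z) (D : set X) (A : X -> Z) (n : nat) :=
  resolvent_bound E D A n /\ forall m : nat, (m < n)%N -> ~ resolvent_bound E D A m.

(* X_ran = closure of ran R_r(l)^p, where R_r(l) = (l E - A)^{-1} E and
   Rl = (l E - A)^{-1} *)
Definition X_ran (E : X -> Z) (Rl : Z -> X) (p : nat) : set X :=
  closure (range (iter p (fun x => Rl (E x)))).

Definition riemann_int0 (f : R -> X) (T : R) (v : X) : Prop :=
  (fun k : nat => rC (T / k%:R) *: \sum_(j < k) f (T * j%:R / k%:R))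
     @ \oo --> v.

Definition improper_int0 (f : R -> X) (v : X) : Prop :=
  exists F : R -> X, (forall T, 0 <= T -> riemann_int0 f T (F T)) /\
    F T @[T --> +oo] --> v.

Definition integrated_semigroup_r (E : X -> Z) (D : set X) (A : X -> Z)
    (p : nat) (Xr : set X) (S : R -> X -> X) : Prop :=
  [/\ (forall t, 0 <= t -> forall x, Xr x -> Xr (S t x)),
      (forall t, 0 <= t -> forall (a : C) x y, Xr x -> Xr y ->
          S t (a *: x + y) = a *: S t x + S t y),
      (forall x, Xr x -> {within `[0, +oo[, continuous (fun t => S t x)}),
      (exists M w : R, forall t, 0 <= t -> forall x, Xr x ->
          `|S t x| <= rC (M * expR (w * t)) * `|x|)
    & (exists om : R, forall l : C, om < complex.Re l ->
          exists Rl : Z -> X, [/\ is_resolvent E D A l Rl, continuous Rl &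
            forall x, Xr x -> exists v : X,
              improper_int0 (fun t => cexp (- (l * rC t)) *: S t x) v /\
              Rl (E x) = l ^+ p *: v])].
End Ops.
End Defs.

From HB Require Import structures.
From mathcomp Require Import all_boot all_order all_algebra.
From mathcomp Require Import all_classical all_reals all_analysis.
From mathcomp Require complex.
Import Order.TTheory GRing.Theory Num.Theory.
Import numFieldNormedType.Exports.
Import complex.
Local Open Scope ring_scope.
Local Open Scope classical_set_scope.

(* The Laplace transform of the zero orbit vanishes, so R_r(l) x = 0 for some
   large l; applying l E - A gives E x = 0, and x = 0 because X_ran meets
   ker E only in 0. *)

Section Integrals.
Variables (R : realType) (X : completeNormedModType R[i]).

Lemma riemann_int0_eq0 (f : R -> X) (T : R) (v : X) :
  0 <= T -> (forall t, 0 <= t -> f t = 0) -> riemann_int0 f T v -> v = 0.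
Proof.
rewrite /riemann_int0 => T0 f0 Hv; apply: norm_cvg_unique Hv _.
apply: cvg_near_cst; apply: nearW => k.
rewrite big1 ?scaler0 // => j _.
by rewrite f0 // divr_ge0 // mulr_ge0.
Qed.

Lemma improper_int0_eq0 (f : R -> X) (v : X) :
  (forall t, 0 <= t -> f t = 0) -> improper_int0 f v -> v = 0.
Proof.
move=> f0 [F [HF HFv]]; apply: norm_cvg_unique HFv (cvg_near_cst (0 : X) (F := +oo) _).
by near=> T; apply: riemann_int0_eq0 (HF T _) => //; near: T; exact: nbhs_pinfty_ge.
Unshelve. all: by end_near.
Qed.
End Integrals.

Section Resolvent.
Context {R : realType} {X Z : completeNormedModType R[i]}.
Context {E : {linear X -> Z}} {D : set X} {A : X -> Z}.

Lemma closed_densely_defined_op0 : closed_densely_defined D A -> A 0 = 0.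
Proof.
case=> D0 _ Alin _ _; have := Alin 1 0 0 D0 D0.
by rewrite !scale1r addr0 -{1}(addr0 (A 0)) => /addrI.
Qed.

Lemma resolvent_eq0 {l : R[i]} {Rl : Z -> X} {z : Z} :
  A 0 = 0 -> is_resolvent E D A l Rl -> Rl z = 0 -> z = 0.
Proof.
move=> A0 [Rl_inv _] Rz0; have [_ <-] := Rl_inv z.
by rewrite Rz0 linear0 A0 scaler0 subr0.
Qed.

Lemma integrated_semigroup_r_orbit0 {p : nat} {Xr : set X} {S : R -> X -> X}
    {x : X} :
  A 0 = 0 -> integrated_semigroup_r E D A p Xr S -> Xr x ->
  (forall t, 0 <= t -> S t x = 0) -> E x = 0.
Proof.
move=> A0 [_ _ _ _ [om Hom]] Xx Sx0.
have [Rl [HRl _ /(_ x Xx) [v [Hv RlEx]]]] :=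
  Hom ((om + 1)%:C)%C ltac:(by rewrite /= ltrDl).
have v0 : v = 0.
  by apply: improper_int0_eq0 Hv => t t0; rewrite Sx0 // scaler0.
by apply: (resolvent_eq0 A0 HRl); rewrite RlEx v0 scaler0.
Qed.

End Resolvent.

Theorem lemma4p2 (R : realType) (X Z : completeNormedModType R[i])
    (E : {linear X -> Z}) (D : set X) (A : X -> Z) (pres : nat)
    (l0 : R[i]) (R0 : Z -> X) (S : R -> X -> X) (x : X) :
  continuous E ->
  closed_densely_defined D A ->
  resolvent_index E D A pres ->
  is_resolvent E D A l0 R0 -> continuous R0 ->
  X_ran E R0 pres.+1 `&` [set y | E y = 0] = [set 0] ->
  integrated_semigroup_r E D A pres.+1 (X_ran E R0 pres.+1) S ->
  X_ran E R0 pres.+1 x ->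
  (forall t : R, 0 <= t -> S t x = 0) ->
  x = 0.
Proof.
move=> _ HA _ _ _ Hker HS Xx Sx0.
have Ex0 := integrated_semigroup_r_orbit0 (closed_densely_defined_op0 HA) HS Xx Sx0.
have : (X_ran E R0 pres.+1 `&` [set y | E y = 0]) x by [].
by rewrite Hker.
Qed.
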